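(* Let $G$ be a graph with minimum degree $\delta$ and order $n$, where $n\ge 2\delta+2$. Then $\gamma_{\rm i}(G)=n-\delta$ if and only if $G$ contains a spanning subgraph isomorphic to $K_{\delta,n-\delta}$ such that the part of the bipartition of size $n-\delta$ is an independent set in $G$.
   Context: All graphs are finite and simple. Indicated domination game on $G$: two players, Dominator and Staller, alternate. In each round Dominator indicates a vertex $v$ not yet dominated by the vertices previously selected by Staller (a vertex dominates itself and its neighbors), and Staller must select a vertex of the closed neighborhood $N[v]$, adding it to a set $D$. The game ends when $D$ is a dominating set of $G$. Dominator wants to minimize $|D|$ and Staller to maximize it; the size of $D$ under optimal play of both is the indicated domination number $\gamma_{\rm i}(G)$. *)

From mathcomp Require Import all_boot.
Set Implicit Arguments. Unset Strict Implicit. Unset Printing Implicit Defensive.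

Definition simple_graph (T : finType) (e : rel T) : Prop :=
  symmetric e /\ irreflexive e.

Section IndicatedDomination.
Variables (T : finType) (e : rel T).

Definition cnbhd (v : T) : {set T} := [set u | (u == v) || e v u].

Definition deg (v : T) : nat := #|[set u | e v u]|.

Definition dominated (D : {set T}) : {set T} :=
  [set x | [exists u in D, x \in cnbhd u]].

Definition dominating (D : {set T}) : bool := dominated D == [set: T].

(* Value of the indicated domination game from position D (the set of
   vertices selected so far by Staller): number of vertices still to be
   selected under optimal play. Dominator (minimizer) indicates an
   undominated vertex v; Staller (maximizer) selects u in N[v].
   Each move dominates at least one new vertex, so fuel #|T| suffices;
   the min is over a nonempty set whenever D is not dominating, and all
   values are <= #|T|, so the default #|T| of the min is harmless. *)
Fixpoint igame (fuel : nat) (D : {set T}) : nat :=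
  match fuel with
  | 0 => 0
  | f.+1 =>
    if dominating D then 0 else
    \big[minn/#|T|]_(v | v \notin dominated D)
       \max_(u in cnbhd v) (igame f (u |: D)).+1
  end.

Definition gamma_i : nat := igame #|T| set0.

Definition is_min_degree (delta : nat) : Prop :=
  (forall v, delta <= deg v) /\ (exists v, deg v = delta).

(* G has a spanning subgraph isomorphic to K_{delta, n - delta} whose part
   of size n - delta is independent in G: a bipartition (A, ~: A) of V with
   #|A| = delta, #|~: A| = n - delta, all A--(~:A) edges present in G,
   and ~: A independent in G. *)
Definition has_spanning_Kdn_indep (delta : nat) : Prop :=
  exists A : {set T},
    [/\ #|A| = delta, #|~: A| = #|T| - delta,
        (forall a b, a \in A -> b \in ~: A -> e a b)
      & (forall b b', b \in ~: A -> b' \in ~: A -> ~~ e b b')].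

End IndicatedDomination.

From mathcomp Require Import all_boot.
From mathcomp Require Import zify.

Set Implicit Arguments. Unset Strict Implicit. Unset Printing Implicit Defensive.

(* Dominator can always keep the game within n - delta moves: whatever vertex
   u Staller takes first, at most n - deg u - 1 <= n - delta - 1 vertices are
   left undominated, and every later move dominates a new one.  If V = A + B
   with #|A| = delta, A complete to B and B independent, Staller answers each
   indication with a vertex of B not yet taken, so all n - delta vertices of B
   get selected.

   Conversely, if the game lasts n - delta moves, Staller's first reply u has
   degree delta and the game from {u} still lasts #|R| moves, R = V - N[u].
   Hence no w in R can be indicated so that every reply dominates two vertices
   of R: each w in R has a closed neighbour p w dominating no other vertex of
   R.  If R had an edge, p would inject the vertices of R having a neighbour
   in R into N(u); as #|R| = n - delta - 1 > delta, some z in R has no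
   neighbour in R, so by minimality N(z) = N(u) contains p r for an endpoint r
   of the edge, contradicting privacy.  So R is independent, every vertex of R
   has neighbourhood N(u), and A = N(u) is the small side of the K_{delta,n-delta}. *)

Lemma geq_bigminn_cond (I : finType) (P : pred I) (F : I -> nat) x i :
  P i -> \big[minn/x]_(j | P j) F j <= F i.
Proof.
move=> Pi; rewrite -big_filter.
have : i \in [seq j <- index_enum I | P j] by rewrite mem_filter Pi mem_index_enum.
elim: [seq j <- index_enum I | P j] => [//|a s IHs]; rewrite inE big_cons.
case/orP=> [/eqP->|/IHs]; first exact: geq_minl.
exact: leq_trans (geq_minr _ _).
Qed.

Lemma leq_bigminn (I : finType) (P : pred I) (F : I -> nat) x k :
  k <= x -> (forall j, P j -> k <= F j) -> k <= \big[minn/x]_(j | P j) F j.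
Proof. by move=> kx kF; elim/big_ind: _ => // a b ka kb; rewrite leq_min ka kb. Qed.

Section IndicatedGame.
Variables (T : finType) (e : rel T).

Definition nbhd (v : T) : {set T} := [set x | e v x].

Lemma cnbhd_refl v : v \in cnbhd e v.
Proof. by rewrite inE eqxx. Qed.

Lemma in_dominated x D : (x \in dominated e D) = [exists u in D, x \in cnbhd e u].
Proof. by rewrite in_set. Qed.

Lemma dominated0 : dominated e set0 = set0.
Proof. by apply/setP=> x; rewrite in_dominated inE; apply/exists_inP=> -[y]; rewrite inE. Qed.

Lemma dominatedU1 u D : dominated e (u |: D) = cnbhd e u :|: dominated e D.
Proof.
apply/setP=> x; rewrite in_setU !in_dominated; apply/exists_inP/orP.
- by case=> y /setU1P[->|yD] xy; [left | right; apply/exists_inP; exists y].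
- case=> [xu|/exists_inP[y yD xy]]; first by exists u; rewrite ?setU11.
  by exists y; rewrite // setU1r.
Qed.

Lemma dominated1 u : dominated e [set u] = cnbhd e u.
Proof. by rewrite -[[set u]]setU0 dominatedU1 dominated0 setU0. Qed.

Lemma dominatingPn D : reflect (exists v, v \notin dominated e D) (~~ dominating e D).
Proof.
apply: (iffP idP) => [|[v]]; last by apply: contra => /eqP->; rewrite inE.
by rewrite /dominating eqEsubset subsetT => /subsetPn[v _ vD]; exists v.
Qed.

Lemma card_setC_dominatedU1 u D :
  #|~: dominated e (u |: D)| = #|~: dominated e D| - #|~: dominated e D :&: cnbhd e u|.
Proof.
rewrite dominatedU1 setCU setIC -setDE; have := cardsID (cnbhd e u) (~: dominated e D); lia.
Qed.

Lemma igame_le_reply f D v : v \notin dominated e D ->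
  exists2 u, u \in cnbhd e v & igame e f.+1 D <= (igame e f (u |: D)).+1.
Proof.
move=> vD; have /negbTE nD : ~~ dominating e D by apply/dominatingPn; exists v.
rewrite /= nD.
have nonempty : 0 < #|cnbhd e v| by apply/card_gt0P; exists v; apply: cnbhd_refl.
have [u vu maxu] := eq_bigmax_cond (fun u => (igame e f (u |: D)).+1) nonempty.
by exists u; rewrite // -maxu; apply: geq_bigminn_cond.
Qed.

(* [#|T|] is the default value of the minimum defining [igame]. *)
Lemma igame_gt_reply f D k : k < #|T| -> ~~ dominating e D ->
  (forall v, v \notin dominated e D ->
     exists2 u, u \in cnbhd e v & k <= igame e f (u |: D)) ->
  k < igame e f.+1 D.
Proof.
move=> kT nD reply; rewrite /= (negbTE nD); apply: leq_bigminn => // v vD.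
by have [u vu ku] := reply v vD; apply: leq_trans (leq_bigmax_cond _ vu).
Qed.

End IndicatedGame.

Section SymmetricGame.
Variables (T : finType) (e : rel T).
Hypothesis e_sym : symmetric e.

Lemma cnbhd_sym u v : (u \in cnbhd e v) = (v \in cnbhd e u).
Proof. by rewrite !inE eq_sym e_sym. Qed.

Lemma igame_le_undominated f D : igame e f D <= #|~: dominated e D|.
Proof.
elim: f D => [//|f IHf] D.
have [domD|/dominatingPn[v vD]] := boolP (dominating e D); first by rewrite /= domD.
have [u vu le_u] := igame_le_reply f vD.
apply: leq_trans le_u _; have := IHf (u |: D); rewrite card_setC_dominatedU1.
have : 0 < #|~: dominated e D :&: cnbhd e u|.
  by apply/card_gt0P; exists v; rewrite inE in_setC vD cnbhd_sym.
have := subset_leq_card (subsetIl (~: dominated e D) (cnbhd e u)); lia.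
Qed.

Lemma igame_lt_of_dominates_two f D v : v \notin dominated e D ->
  (forall y, y \in cnbhd e v -> 1 < #|~: dominated e D :&: cnbhd e y|) ->
  igame e f.+1 D < #|~: dominated e D|.
Proof.
move=> vD two; have [u vu le_u] := igame_le_reply f vD.
apply: leq_ltn_trans le_u _; have := igame_le_undominated f (u |: D).
rewrite card_setC_dominatedU1; have := two u vu.
have := subset_leq_card (subsetIl (~: dominated e D) (cnbhd e u)); lia.
Qed.

Hypothesis e_irr : irreflexive e.

Lemma card_cnbhd u : #|cnbhd e u| = (deg e u).+1.
Proof.
have -> : cnbhd e u = u |: nbhd e u by apply/setP=> x; rewrite !inE.
by rewrite cardsU1 inE e_irr.
Qed.

Lemma deg_ltn_card u : deg e u < #|T|.
Proof. by rewrite -card_cnbhd max_card. Qed.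

Lemma card_setC_cnbhd u : #|~: cnbhd e u| = #|T| - (deg e u).+1.
Proof. by rewrite -(cardsC (cnbhd e u)) card_cnbhd addKn. Qed.

Lemma gamma_i_le_first_reply (v : T) :
  exists u, gamma_i e <= (igame e #|T|.-1 [set u]).+1.
Proof.
have v_undom : v \notin dominated e set0 by rewrite dominated0 inE.
have T_pos : 0 < #|T| by apply/card_gt0P; exists v.
have [u _] := igame_le_reply #|T|.-1 v_undom; rewrite prednK // setU0 => le_u.
by exists u.
Qed.

Lemma gamma_i_le_sub_min_degree delta :
  is_min_degree e delta -> gamma_i e <= #|T| - delta.
Proof.
move=> [deg_ge [v _]]; have [u gamma_le] := gamma_i_le_first_reply v.
apply: leq_trans gamma_le _; have := igame_le_undominated #|T|.-1 [set u].
rewrite dominated1 card_setC_cnbhd; have := deg_ge u; have := deg_ltn_card u; lia.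
Qed.

Lemma staller_first_reply delta : is_min_degree e delta -> #|T| - delta <= gamma_i e ->
  exists2 u, deg e u = delta & #|~: cnbhd e u| <= igame e #|T|.-1 [set u].
Proof.
move=> [deg_ge [v _]] gamma_ge; have [u gamma_le] := gamma_i_le_first_reply v.
have := igame_le_undominated #|T|.-1 [set u]; rewrite dominated1 card_setC_cnbhd => game_le.
have deg_u : deg e u = delta by have := deg_ge u; have := deg_ltn_card u; lia.
by exists u; rewrite // card_setC_cnbhd deg_u; lia.
Qed.

End SymmetricGame.

Section IndependentSide.
Variables (T : finType) (e : rel T) (A : {set T}).
Hypothesis A_complete : forall a b, a \in A -> b \in ~: A -> e a b.
Hypothesis B_indep : forall b b', b \in ~: A -> b' \in ~: A -> ~~ e b b'.

Lemma igame_ge_indep_side f (D : {set T}) : D \subset ~: A ->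
  #|~: A :\: D| <= f -> #|~: A :\: D| <= igame e f D.
Proof.
elim: f D => [|f IHf] D DB; first by rewrite leqn0 => /eqP->.
case kD : #|~: A :\: D| => [//|k] le_kf.
have [b /setDP[bB bD]] : exists b, b \in ~: A :\: D by apply/card_gt0P; rewrite kD.
have b_undom : b \notin dominated e D.
  rewrite in_dominated; apply/exists_inPn => d dD; rewrite inE negb_or.
  by rewrite (B_indep (subsetP DB d dD) bB) andbT; apply: contraNneq bD => ->.
have nD : ~~ dominating e D by apply/dominatingPn; exists b.
apply: (igame_gt_reply _ nD) => [|v v_undom]; first by rewrite -kD max_card.
have [u vu /setDP[uB uD]] : exists2 u, u \in cnbhd e v & u \in ~: A :\: D.
  have [vA|vB] := boolP (v \in A).
    by exists b; [rewrite inE (A_complete vA bB) orbT | rewrite inE bD bB].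
  exists v; first exact: cnbhd_refl.
  rewrite inE in_setC vB andbT; apply: contra v_undom => vD.
  by rewrite in_dominated; apply/exists_inP; exists v; rewrite ?cnbhd_refl.
exists u => //.
have card_uD : #|~: A :\: (u |: D)| = k.
  by move: kD; rewrite setUC -setDDl (cardsD1 u) inE uB uD => -[].
by rewrite -card_uD; apply: IHf; rewrite ?card_uD // subUset sub1set uB DB.
Qed.

Lemma gamma_i_ge_card_indep_side : #|~: A| <= gamma_i e.
Proof.
have := igame_ge_indep_side (f := #|T|) (D := set0); rewrite setD0.
by apply; [exact: sub0set | exact: max_card].
Qed.

End IndependentSide.

Section MinDegreeVertex.
Variables (T : finType) (e : rel T) (u : T).
Hypotheses (e_sym : symmetric e) (e_irr : irreflexive e).
Local Notation R := (~: cnbhd e u).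

Lemma private_nbr_of_igame_ge f w : #|R| <= igame e f.+1 [set u] -> w \in R ->
  exists2 y, y \in cnbhd e w & #|R :&: cnbhd e y| <= 1.
Proof.
move=> le_game wR; apply/exists_inP/contraT => /exists_inPn two.
suff : igame e f.+1 [set u] < #|R| by rewrite ltnNge le_game.
have w_undom : w \notin dominated e [set u] by rewrite dominated1 -in_setC.
rewrite -dominated1; apply: (igame_lt_of_dominates_two e_sym f w_undom) => y wy.
by rewrite dominated1 ltnNge; apply: two.
Qed.

Hypothesis deg_u_min : forall v, deg e u <= deg e v.

Lemma nbhd_eq_of_isolated_nonnbr z : z \in R -> {in R, forall x, ~~ e z x} ->
  nbhd e z = nbhd e u.
Proof.
move=> zR z_isol; apply/eqP; rewrite eqEcard (deg_u_min z) andbT.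
apply/subsetP=> x; rewrite !inE => zx.
have : x \notin R by apply: contraL zx => /z_isol.
rewrite !inE negbK => /orP[/eqP xu|//].
by move: zR; rewrite !inE -xu e_sym zx orbT.
Qed.

Section PrivateNeighbours.
Variable p : T -> T.
Hypothesis p_cnbhd : {in R, forall w, p w \in cnbhd e w}.
Hypothesis p_private : {in R, forall w, #|R :&: cnbhd e (p w)| <= 1}.

Lemma private_nbr_eq w x : w \in R -> x \in R -> x \in cnbhd e (p w) -> x = w.
Proof.
move=> wR xR xp; apply: (card_le1_eqP (p_private wR)); rewrite in_setI ?xR ?wR //.
by rewrite (cnbhd_sym e_sym) p_cnbhd.
Qed.

Lemma private_nbr_inj : {in R &, injective p}.
Proof.
move=> w1 w2 w1R w2R pE; apply/esym/(private_nbr_eq w1R w2R).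
by rewrite pE (cnbhd_sym e_sym) p_cnbhd.
Qed.

Lemma private_nbr_in_nbhd w r : w \in R -> r \in R -> e w r -> p w \in nbhd e u.
Proof.
move=> wR rR wr; have pw := p_cnbhd wR.
have pw_notin_R : p w \notin R.
  apply/negP=> pR; have pwE := private_nbr_eq wR pR (cnbhd_refl _ _).
  have /(private_nbr_eq wR rR) rw : r \in cnbhd e (p w) by rewrite pwE inE wr orbT.
  by move: wr; rewrite rw e_irr.
move: pw_notin_R; rewrite !inE negbK => /orP[/eqP pu|//].
have uw : u \in cnbhd e w by rewrite -pu.
by move: wR; rewrite in_setC (cnbhd_sym e_sym) uw.
Qed.

Lemma nonnbrs_indep_of_private_nbr : deg e u < #|R| -> {in R &, forall r1 r2, ~~ e r1 r2}.
Proof.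
move=> deg_lt r1 r2 r1R r2R; apply/negP => r12.
pose W := [set w in R | [exists r in R, e w r]].
have card_W : #|W| <= deg e u.
  rewrite -(card_in_imset (sub_in2 _ private_nbr_inj)); last by move=> w /setIdP[].
  apply: subset_leq_card; apply/subsetP => _ /imsetP[w /setIdP[wR /exists_inP[r rR wr]] ->].
  exact: private_nbr_in_nbhd wR rR wr.
have [z /setDP[zR zW]] : exists z, z \in R :\: W.
  apply/card_gt0P; have := cardsID W R; have := subset_leq_card (subsetIr R W); lia.
have z_isol : {in R, forall x, ~~ e z x}.
  by move=> x xR; apply: contra zW => zx; rewrite inE zR; apply/exists_inP; exists x.
have r1W : r1 \in W by rewrite inE r1R; apply/exists_inP; exists r2.
have := private_nbr_in_nbhd r1R r2R r12.
rewrite -(nbhd_eq_of_isolated_nonnbr zR z_isol) inE => z_p.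
have zr1 : z = r1 by apply: private_nbr_eq; rewrite // inE e_sym z_p orbT.
by move: zW; rewrite zr1 r1W.
Qed.

End PrivateNeighbours.

Lemma Kdn_of_nonnbrs_indep : {in R &, forall r1 r2, ~~ e r1 r2} ->
  has_spanning_Kdn_indep e (deg e u).
Proof.
move=> R_indep.
have inR b : b != u -> ~~ e u b -> b \in R by move=> bu ub; rewrite !inE negb_or bu.
exists (nbhd e u); split => //.
- by rewrite -(cardsC (nbhd e u)) addKn.
- move=> a b; rewrite !inE => ua ub; have [->|bu] := eqVneq b u; first by rewrite e_sym.
  have bR := inR b bu ub.
  have := nbhd_eq_of_isolated_nonnbr bR (fun x => R_indep b x bR).
  by move/setP/(_ a); rewrite !inE ua e_sym.
- move=> b b'; rewrite !inE => ub ub'.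
  have [->|bu] := eqVneq b u; first exact: ub'.
  have [->|b'u] := eqVneq b' u; first by rewrite e_sym.
  exact: R_indep _ _ (inR b bu ub) (inR b' b'u ub').
Qed.

Lemma Kdn_of_igame_ge f : #|R| <= igame e f [set u] -> deg e u < #|R| ->
  has_spanning_Kdn_indep e (deg e u).
Proof.
case: f => [|f] game_R deg_lt; first by move: game_R deg_lt => /=; lia.
have /fin_all_exists2[p p_cnbhd p_private] w :
    exists2 y, w \in R -> y \in cnbhd e w & w \in R -> #|R :&: cnbhd e y| <= 1.
  have [wR|_] := boolP (w \in R); last by exists w.
  by have [y wy y_le1] := private_nbr_of_igame_ge game_R wR; exists y.
exact/Kdn_of_nonnbrs_indep/(nonnbrs_indep_of_private_nbr p_cnbhd p_private).
Qed.

End MinDegreeVertex.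

Theorem theorem4p1 (T : finType) (e : rel T) (delta : nat) :
  simple_graph e ->
  is_min_degree e delta ->
  2 * delta + 2 <= #|T| ->
  (gamma_i e = #|T| - delta <-> has_spanning_Kdn_indep e delta).
Proof.
move=> [e_sym e_irr] min_deg card_T.
have gamma_le := gamma_i_le_sub_min_degree e_sym e_irr min_deg.
split=> [gamma_eq | [A [_ card_B A_complete B_indep]]]; last first.
  by apply/eqP; rewrite eqn_leq gamma_le -card_B gamma_i_ge_card_indep_side.
have [u deg_u game_u] := staller_first_reply e_sym e_irr min_deg (eq_leq (esym gamma_eq)).
have [deg_ge _] := min_deg.
rewrite -deg_u; apply: (Kdn_of_igame_ge e_sym e_irr _ game_u) => [w|].
  by rewrite deg_u.
by rewrite card_setC_cnbhd // deg_u; lia.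
Qed.
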